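(* Let $\Pi$ be a ground HEX-program, $\mathbf{A}$ an interpretation, and $U$ an unfounded set of $\Pi$ with respect to $\mathbf{A}$. Let $C\subseteq U$ be a cut of $U$, i.e. (i) $b\not\rightarrow_e a$ for all $a\in C$ and $b\in U$, and (ii) $b\not\rightarrow a$ and $a\not\rightarrow b$ for all $a\in C$ and $b\in U\setminus C$. Then $U\setminus C$ is an unfounded set of $\Pi$ with respect to $\mathbf{A}$.
   Context: Ground HEX-programs. A ground ordinary atom is $p(c_1,\dots,c_\ell)$. A ground external atom is $\&g[\vec p](\vec c)$ with input list $\vec p$ (predicate names or constants) and output constants $\vec c$. A ground HEX-program is a finite set of rules $r$: $a_1\lor\dots\lor a_k\leftarrow b_1,\dots,b_m,\mathrm{not}\,b_{m+1},\dots,\mathrm{not}\,b_n$, with ordinary ground head atoms and each $b_j$ an ordinary or external ground atom; $H(r)=\{a_1,\dots,a_k\}$, $B^+(r)=\{b_1,\dots,b_m\}$, $B^-(r)=\{b_{m+1},\dots,b_n\}$, $B(r)$ the set of body literals. Interpretations: complete consistent sets $\mathbf{A}$ of signed literals $\mathbf{T}a$/$\mathbf{F}a$. $\mathbf{A}\models a$ (ordinary) iff $\mathbf{T}a\in\mathbf{A}$; $\mathbf{A}\models\&g[\vec p](\vec c)$ iff the Boolean oracle $f_{\&g}(\mathbf{A},\vec p,\vec c)=1$, whose value depends only on the extensions in $\mathbf{A}$ of the input predicates in $\vec p$; $\mathbf{A}\models\mathrm{not}\,b$ iff $\mathbf{A}\not\models b$. Unfounded sets: for a set $X$ of ordinary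 ground atoms appearing in $\Pi$, $\mathbf{A}\,\dot\cup\neg.\,X=(\mathbf{A}\setminus\{\mathbf{T}a\mid a\in X\})\cup\{\mathbf{F}a\mid a\in X\}$; $X$ is an unfounded set of $\Pi$ w.r.t. $\mathbf{A}$ iff for every $r\in\Pi$ with $H(r)\cap X\neq\emptyset$: (i) some literal of $B(r)$ is false w.r.t. $\mathbf{A}$, or (ii) some literal of $B(r)$ is false w.r.t. $\mathbf{A}\,\dot\cup\neg.\,X$, or (iii) some atom of $H(r)\setminus X$ is true w.r.t. $\mathbf{A}$. Dependencies: $x\rightarrow y$ iff some $r\in\Pi$ has $x\in H(r)$, $y\in B^+(r)$; $x\rightarrow_e y$ iff some $r\in\Pi$ has $x\in H(r)$ and an external atom $\&g[q_1,\dots,q_n](\vec e)\in B^+(r)\cup B^-(r)$ with some $q_i$ equal to the predicate of $y$. *)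

From mathcomp Require Import all_boot.
From Stdlib Require List.
Set Implicit Arguments. Unset Strict Implicit. Unset Printing Implicit Defensive.

Section Hex.
(* Pr: predicate names, Cn: constants, Gn: external predicate names *)
Variables (Pr Cn Gn : eqType).

Definition oatom : eqType := (Pr * seq Cn)%type.
Definition pred_of (a : oatom) : Pr := a.1.

(* ground external atom &g[p_1..p_n](c_1..c_m); inputs are predicate names or constants *)
Record eatom := EAtom { ename : Gn; einp : seq (Pr + Cn); eout : seq Cn }.

Inductive batom := BO of oatom | BE of eatom.

(* rule  a_1 v ... v a_k <- b_1,...,b_m, not b_{m+1},..., not b_n *)
Record rule := Rule { head : seq oatom; bpos : seq batom; bneg : seq batom }.
Definition program := seq rule.

(* interpretation: complete consistent set of signed literals, i.e. a
   truth assignment to the ordinary ground atoms (T a iff A a = true) *)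
Definition interp := oatom -> bool.

Definition oracle := Gn -> interp -> seq (Pr + Cn) -> seq Cn -> bool.

Definition oracle_ok (f : oracle) : Prop :=
  forall g (A A' : interp) ps cs,
    (forall a : oatom, inl (pred_of a) \in ps -> A a = A' a) ->
    f g A ps cs = f g A' ps cs.

Variable f : oracle.

Definition sat_b (A : interp) (b : batom) : bool :=
  match b with
  | BO a => A a
  | BE e => f (ename e) A (einp e) (eout e)
  end.

Definition body_false (A : interp) (r : rule) : bool :=
  has (fun b => ~~ sat_b A b) (bpos r) || has (fun b => sat_b A b) (bneg r).

Definition unf_upd (A : interp) (X : oatom -> bool) : interp :=
  fun a => A a && ~~ X a.

Definition batom_oatoms (b : batom) : seq oatom :=
  match b with BO a => [:: a] | BE _ => [::] end.

Definition rule_atoms (r : rule) : seq oatom :=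
  head r ++ flatten (map batom_oatoms (bpos r)) ++ flatten (map batom_oatoms (bneg r)).
Definition prog_atoms (P : program) : seq oatom := flatten (map rule_atoms P).

Definition unfounded (P : program) (A : interp) (X : oatom -> bool) : Prop :=
  (forall a, X a -> a \in prog_atoms P) /\
  forall r, List.In r P -> has X (head r) ->
    [|| body_false A r, body_false (unf_upd A X) r
      | has (fun a => ~~ X a && A a) (head r)].

Definition dep (P : program) (x y : oatom) : Prop :=
  exists2 r, List.In r P & (x \in head r) /\ List.In (BO y) (bpos r).

Definition edep (P : program) (x y : oatom) : Prop :=
  exists2 r, List.In r P & (x \in head r) /\
    exists e, (List.In (BE e) (bpos r) \/ List.In (BE e) (bneg r)) /\ (inl (pred_of y) \in einp e).

Definition is_cut (P : program) (U C : oatom -> bool) : Prop :=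
  (forall a, C a -> U a) /\
  (forall a b, C a -> U b -> ~ edep P b a) /\
  (forall a b, C a -> U b -> ~~ C b -> ~ dep P b a /\ ~ dep P a b).

End Hex.

(* Passing from U to a subset V changes A minus U only on the atoms of U \ V,
   which regain their value under A.  A negative body literal that is false
   w.r.t. A minus U stays false, as this only needs an atom outside U to be
   true.  A false positive literal is either false w.r.t. A or about an atom
   of U; for V = U \ C and a rule with a head atom in U \ C that atom is not
   in C by the second cut condition.  The external atoms of such a rule take
   no predicate of an atom of C as input by the first cut condition, so their
   value does not change.  Finally, head atoms outside U that are true under A
   are also outside V. *)
From Pilot Require Import Defs.
From mathcomp Require Import all_boot.
From Stdlib Require List.
Set Implicit Arguments. Unset Strict Implicit.

Lemma hasP_In (T : Type) (p : pred T) (s : seq T) :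
  reflect (exists2 x, List.In x s & p x) (has p s).
Proof.
elim: s => [|x s IH] /=; first by right; case.
apply: (iffP orP) => [[px|/IH [y sy py]]|[y [<-|sy] py]].
- by exists x; [left|].
- by exists y; [right|].
- by left.
- by right; apply/IH; exists y.
Qed.

Section ShrinkUnfounded.

Variables (Pr Cn Gn : eqType) (f : oracle Pr Cn Gn).
Hypothesis f_ok : oracle_ok f.
Variables (A : interp Pr Cn) (X Y : oatom Pr Cn -> bool).
Hypothesis YX : forall a, Y a -> X a.

Definition body_ext (r : rule Pr Cn Gn) (e : eatom Pr Cn Gn) : Prop :=
  List.In (BE e) (bpos r) \/ List.In (BE e) (bneg r).

Variable r : rule Pr Cn Gn.
Hypothesis bpos_closed : forall y, List.In (BO Gn y) (bpos r) -> X y -> Y y.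
Hypothesis ext_closed : forall e a,
  body_ext r e -> inl (pred_of a) \in einp e -> X a -> Y a.

Lemma sat_ext_unf_upd e :
  body_ext r e -> sat_b f (unf_upd A X) (BE e) = sat_b f (unf_upd A Y) (BE e).
Proof.
move=> re /=; apply: f_ok => a ea; rewrite /unf_upd.
by have -> : Y a = X a by apply/idP/idP => [/YX|/(ext_closed re ea)].
Qed.

Lemma body_false_unf_upd_shrink :
  body_false f (unf_upd A X) r ->
  body_false f A r || body_false f (unf_upd A Y) r.
Proof.
case/orP=> /hasP_In [[y|e] rb bF].
- move: bF; rewrite /= /unf_upd negb_and negbK => /orP [nAy|Xy].
    by apply/orP; left; apply/orP; left; apply/hasP_In; exists (BO Gn y).
  apply/orP; right; apply/orP; left; apply/hasP_In; exists (BO Gn y) => //=.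
  by rewrite /unf_upd (bpos_closed rb Xy) andbF.
- apply/orP; right; apply/orP; left; apply/hasP_In; exists (BE e) => //.
  by rewrite -sat_ext_unf_upd //; left.
- move: bF; rewrite /= /unf_upd => /andP [Ay nXy].
  apply/orP; right; apply/orP; right; apply/hasP_In; exists (BO Gn y) => //=.
  by rewrite /unf_upd Ay; apply: contra nXy; exact: YX.
- apply/orP; right; apply/orP; right; apply/hasP_In; exists (BE e) => //.
  by rewrite -sat_ext_unf_upd //; right.
Qed.

End ShrinkUnfounded.

Lemma unfounded_shrink (Pr Cn Gn : eqType) (f : oracle Pr Cn Gn)
    (P : program Pr Cn Gn) (A : interp Pr Cn) (X Y : oatom Pr Cn -> bool) :
  oracle_ok f -> unfounded f P A X -> (forall a, Y a -> X a) ->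
  (forall r, List.In r P -> has Y (Defs.head r) ->
     (forall y, List.In (BO Gn y) (bpos r) -> X y -> Y y) /\
     (forall e a, body_ext r e -> inl (pred_of a) \in einp e -> X a -> Y a)) ->
  unfounded f P A Y.
Proof.
move=> f_ok [X_atoms X_unf] YX Y_closed; split=> [a /YX|r rP hY]; first exact: X_atoms.
have [bpos_closed ext_closed] := Y_closed r rP hY.
have /or3P [bF|bF|hd] := X_unf r rP (sub_has YX hY).
- by rewrite bF.
- by case/orP: (body_false_unf_upd_shrink f_ok YX bpos_closed ext_closed bF) => ->;
    rewrite ?orbT.
- apply/or3P; apply: Or33; apply: sub_has hd => a /andP [nXa Aa].
  by rewrite Aa andbT; apply: contra nXa; exact: YX.
Qed.

Theorem lemma1 (Pr Cn Gn : eqType) (f : oracle Pr Cn Gn) (Hf : oracle_ok f)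
  (P : program Pr Cn Gn) (A : interp Pr Cn) (U C : oatom Pr Cn -> bool) :
  unfounded f P A U -> is_cut P U C ->
  unfounded f P A (fun a => U a && ~~ C a).
Proof.
move=> U_unf [_ [C_no_edep C_no_dep]].
apply: (unfounded_shrink Hf U_unf).
  by move=> a /andP [].
move=> r rP /hasP [b hb /andP [Ub nCb]].
split=> [y ry Uy|e a re ea Ua]; rewrite ?Uy ?Ua /=.
- apply/negP=> Cy; have [bdep _] := C_no_dep y b Cy Ub nCb.
  by apply: bdep; exists r.
- apply/negP=> Ca; apply: (C_no_edep a b Ca Ub).
  by exists r => //; split => //; exists e.
Qed.
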